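(* Let $k\ge 2$ and let $G$ be a graph admitting an acyclic $k$-coloring. Then $\chi_s(G)\le k\cdot 2^{k-2}$.
   Context: An acyclic $k$-coloring of a graph is a proper vertex coloring with $k$ colors in which every cycle receives at least three colors (any two color classes induce a forest). A signified graph $(G,\Sigma)$ is a graph $G$ with a set $\Sigma\subseteq E(G)$ of negative edges, other edges positive. Resigning $X\subseteq V(G)$ changes the sign of exactly the edges with one endpoint in $X$; two signified graphs on $G$ are equivalent if one is obtained from the other by resigning. A signified homomorphism is a vertex map sending each edge to an edge of the same sign; a signed homomorphism of $(G,\Sigma)$ to $(H,\Lambda)$ is a signified homomorphism between some signified graphs equivalent to $(G,\Sigma)$ and $(H,\Lambda)$. $\chi_s(G,\Sigma)$ is the minimum number of vertices of a signified graph to which $(G,\Sigma)$ admits a signed homomorphism, and $\chi_s(G)=\max_{\Sigma\subseteq E(G)}\chi_s(G,\Sigma)$. *)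

From mathcomp Require Import all_boot.
Set Implicit Arguments. Unset Strict Implicit. Unset Printing Implicit Defensive.

Record sgraph (T : finType) := SGraph {
  adj : rel T;
  adj_sym : symmetric adj;
  adj_irr : irreflexive adj }.

Definition is_cycle (T : finType) (G : sgraph T) (s : seq T) : Prop :=
  [/\ uniq s, 2 < size s & cycle (adj G) s].

Definition acyclic_coloring (T : finType) (G : sgraph T) (k : nat)
    (c : T -> 'I_k) : Prop :=
  (forall x y, adj G x y -> c x != c y) /\
  (forall s, is_cycle G s -> 2 < #|[set c x | x in s]|).

(* A sign set Sigma is encoded by any relation S: the edge xy is negative iff
   (x,y) or (y,x) is in S (only edges of the graph matter). *)
Definition neg (T : Type) (S : rel T) : rel T := fun x y => S x y || S y x.

Definition resign (T : finType) (X : {set T}) (sg : rel T) : rel T :=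
  fun x y => sg x y (+) ((x \in X) (+) (y \in X)).

Definition signified_hom (T U : finType) (eG sG : rel T) (eH sH : rel U)
    (phi : T -> U) : bool :=
  [forall x, forall y, eG x y ==>
      eH (phi x) (phi y) && (sH (phi x) (phi y) == sG x y)].

Definition signed_hom (T U : finType) (eG sG : rel T) (eH sH : rel U)
    (phi : T -> U) : bool :=
  [exists X : {set T}, exists Y : {set U},
      signified_hom eG (resign X sG) eH (resign Y sH) phi].

(* A simple graph on 'I_n, encoded by an arbitrary set E of ordered pairs:
   i ~ j iff i != j and (i,j) or (j,i) in E.  Every simple graph on 'I_n
   arises this way. Signs encoded likewise by a set L. *)
Definition tadj n (E : {set 'I_n * 'I_n}) : rel 'I_n :=
  fun i j => (i != j) && (((i, j) \in E) || ((j, i) \in E)).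
Definition tneg n (L : {set 'I_n * 'I_n}) : rel 'I_n :=
  fun i j => ((i, j) \in L) || ((j, i) \in L).

Definition maps_to (T : finType) (G : sgraph T) (S : rel T) (n : nat) : bool :=
  [exists E : {set 'I_n * 'I_n}, exists L : {set 'I_n * 'I_n},
     exists phi : {ffun T -> 'I_n},
       signed_hom (adj G) (neg S) (tadj E) (tneg L) phi].

Lemma maps_to_exists (T : finType) (G : sgraph T) (S : rel T) :
  exists n, maps_to G S n.
Proof.
exists #|T|; apply/existsP.
exists [set p : 'I_#|T| * 'I_#|T| | adj G (enum_val p.1) (enum_val p.2)].
apply/existsP.
exists [set p : 'I_#|T| * 'I_#|T| | S (enum_val p.1) (enum_val p.2)].
apply/existsP; exists [ffun x => enum_rank x].
apply/existsP; exists set0; apply/existsP; exists set0.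
apply/forallP=> x; apply/forallP=> y; apply/implyP=> exy.
rewrite !ffunE /tadj /tneg /resign /neg !inE !enum_rankK /= exy /=.
rewrite !addbF andbT.
have -> : enum_rank x != enum_rank y.
  apply/negP=> /eqP /enum_rank_inj exy'; subst y.
  by rewrite (adj_irr G) in exy.
by rewrite eqxx.
Qed.

Definition chi_s_sig (T : finType) (G : sgraph T) (S : rel T) : nat :=
  ex_minn (maps_to_exists G S).

Definition chi_s (T : finType) (G : sgraph T) : nat :=
  \max_(S : {set T * T}) chi_s_sig G (fun x y => (x, y) \in S).

From mathcomp Require Import all_boot.
Set Implicit Arguments. Unset Strict Implicit. Unset Printing Implicit Defensive.

(* 1. In a forest every signature is equivalent to the all-positive one: there
      is a potential g with g x (+) g y = s x y on every edge.  We add the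
      edges one at a time; a new edge joins two components (by acyclicity),
      and flipping g on one of them repairs its sign.
   2. For an acyclic coloring c, the subgraph induced by any two colors is a
      forest, so each pair of colors {i, j} has its own potential.  Reading
      the potential of {c x, j} at x gives bits f x j with
      f x (c y) (+) f y (c x) = s x y on every edge xy.
   3. Resigning at the vertices x whose bit at a fixed reference color
      ref (c x) is set, each vertex is described by its color and its k - 2
      remaining bits.  These k * 2 ^ (k - 2) codes form a signified graph,
      adjacent when their colors differ, receiving a signified
      homomorphism; transporting it to 'I_n gives the bound on chi_s. *)

(* g : T -> bool is a potential of the signature s on the edge relation e
   when resigning at the set [set x | g x] makes every edge of e positive. *)
Definition is_potential (T : Type) (e s : rel T) (g : T -> bool) : Prop :=
  forall x y, e x y -> g x (+) g y = s x y.

Section ForestPotential.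
Variables (T : finType) (r : rel T).
Hypotheses (r_sym : symmetric r) (r_irr : irreflexive r).
Hypothesis r_acyclic : forall p : seq T, ~ [/\ uniq p, 2 < size p & cycle r p].

Definition edges_in (es : seq (T * T)) : rel T :=
  fun x y => r x y && (((x, y) \in es) || ((y, x) \in es)).

Lemma edges_in_sym es : symmetric (edges_in es).
Proof. by move=> x y; rewrite /edges_in r_sym orbC. Qed.

(* In a forest, the endpoints of an edge ab are disconnected once ab is
   removed: a path from a to b would close a cycle with ab. *)
Lemma disconnected_ends es a b :
  r a b -> ~~ edges_in es a b -> ~~ connect (edges_in es) a b.
Proof.
move=> rab not_ab.
have a_neq_b : a != b by apply: contraTneq rab => ->; rewrite r_irr.
apply/negP => /connectP [p p_path p_last].
case: (shortenP p_path) p_last => q q_path q_uniq _ q_last.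
apply: (r_acyclic (p := a :: q)); split => //.
  case: q q_path q_uniq q_last => [|z [|w q]] //=.
    by move=> _ _ a_eq_b; rewrite a_eq_b eqxx in a_neq_b.
  by move=> /andP [az _] _ z_eq_b; rewrite z_eq_b az in not_ab.
rewrite /cycle /= rcons_path -q_last r_sym rab andbT.
by apply: sub_path q_path => x y /andP [].
Qed.

Variable s : rel T.
Hypothesis s_sym : symmetric s.

Lemma potential_flip e g a : symmetric e -> is_potential e s g ->
  is_potential e s (fun x => g x (+) connect e a x).
Proof.
move=> e_sym g_pot x y exy.
have -> : connect e a y = connect e a x.
  apply/idP/idP => conn; apply: (connect_trans conn); apply: connect1 => //.
  by rewrite e_sym.
by rewrite addbACA addbb addbF; apply: g_pot.
Qed.

Lemma potential_cons es a b g : is_potential (edges_in es) s g ->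
  (r a b -> g a (+) g b = s a b) -> is_potential (edges_in ((a, b) :: es)) s g.
Proof.
move=> g_pot g_ab x y /andP [+ xy_in]; rewrite !in_cons in xy_in.
case/orP: xy_in => /orP [/eqP [-> ->] | xy_in] rxy; first exact: g_ab.
- by apply: g_pot; rewrite /edges_in rxy xy_in.
- by rewrite addbC s_sym; apply: g_ab; rewrite r_sym.
- by apply: g_pot; rewrite /edges_in rxy xy_in orbT.
Qed.

(* Induction on the recorded edges: a new edge either is already satisfied,
   or joins two components, one of which is flipped. *)
Lemma potential_edges es : exists g, is_potential (edges_in es) s g.
Proof.
elim: es => [|[a b] es [g g_pot]].
  by exists (fun=> false) => x y; rewrite /edges_in andbF.
case: (boolP (r a b ==> (g a (+) g b == s a b))) => [g_ok | ].
  by exists g; apply: potential_cons => // /(implyP g_ok) /eqP.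
rewrite negb_imply => /andP [rab g_bad].
have not_ab : ~~ edges_in es a b by apply: contra g_bad => /g_pot ->.
exists (fun x => g x (+) connect (edges_in es) a x).
apply: potential_cons => [|_]; first exact/potential_flip/g_pot/edges_in_sym.
rewrite connect0 (negbTE (disconnected_ends rab not_ab)).
by move: g_bad; case: (g a); case: (g b); case: (s a b).
Qed.

Lemma forest_potential : exists g, is_potential r s g.
Proof.
have [g g_pot] := potential_edges (enum [set: T * T]).
by exists g => x y rxy; apply: g_pot; rewrite /edges_in rxy mem_enum inE.
Qed.

End ForestPotential.

Section PairPotentials.
Variables (T : finType) (G : sgraph T) (k : nat) (c : T -> 'I_k).
Hypothesis c_acyclic : acyclic_coloring G c.

Definition bicolored_adj (P : {set 'I_k}) : rel T :=
  fun x y => [&& #|P| <= 2, adj G x y, c x \in P & c y \in P].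

(* Since every cycle of G sees three colors, each bicolored subgraph is a
   forest. *)
Lemma bicolored_acyclic P p :
  ~ [/\ uniq p, 2 < size p & cycle (bicolored_adj P) p].
Proof.
case=> p_uniq p_size p_cycle.
have [x0 x0p] : exists x, x \in p.
  by case: p p_size {p_uniq p_cycle} => [|x q] // _; exists x; exact: mem_head.
have P_small : #|P| <= 2 by case/and4P: (next_cycle p_cycle x0p).
have p_in_G : is_cycle G p.
  by split=> //; apply: sub_cycle p_cycle => x y /and3P [].
case: c_acyclic => _ /(_ p p_in_G); apply/negP; rewrite -leqNgt.
apply: leq_trans P_small; apply/subset_leq_card/subsetP => _ /imsetP [x xp ->].
by case/and4P: (next_cycle p_cycle xp).
Qed.

(* Pair potentials: every vertex x carries, for each color j, a bit f x j,
   and each edge xy is positive after resigning by the bits f x (c y) and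
   f y (c x) -- both taken from the forest colored {c x, c y}. *)
Lemma pair_potentials (s : rel T) : symmetric s ->
  exists f : T -> 'I_k -> bool,
    forall x y, adj G x y -> f x (c y) (+) f y (c x) = s x y.
Proof.
move=> s_sym.
have bicolored_pot P : exists g, is_potential (bicolored_adj P) s g.
  apply: forest_potential => //; last exact: bicolored_acyclic.
    by move=> x y; rewrite /bicolored_adj (adj_sym G) [(c x \in P) && _]andbC.
  by move=> x; rewrite /bicolored_adj (adj_irr G) andbF.
have [pot pot_ok] := fin_all_exists bicolored_pot.
exists (fun x j => pot [set c x; j] x) => x y xy.
rewrite setUC; apply: pot_ok.
by rewrite /bicolored_adj xy cards2 ltnS leq_b1 !inE !eqxx orbT.
Qed.

End PairPotentials.

Section CodeGraph.
Variable m : nat.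

Definition ref_color (i : 'I_m.+2) : 'I_m.+2 := lift i ord0.

Definition other_color (i : 'I_m.+2) (t : 'I_m) : 'I_m.+2 :=
  lift i (lift ord0 t).

(* Vertices of the target: a color i together with one bit for each color
   other than i and ref_color i; there are (m + 2) * 2 ^ m of them. *)
Definition code : Type := ('I_m.+2 * {ffun 'I_m -> bool})%type.

Lemma card_code : #|{: code}| = m.+2 * 2 ^ m.
Proof. by rewrite card_prod card_ffun !card_ord card_bool. Qed.

(* The bit of w at color j (false at the color of w and at its reference). *)
Definition code_bit (w : code) (j : 'I_m.+2) : bool :=
  if unlift w.1 j is Some j' then
    if unlift ord0 j' is Some t then w.2 t else false
  else false.

Definition code_adj : rel code := fun w w' => w.1 != w'.1.
Definition code_sign : rel code :=
  fun w w' => code_bit w w'.1 (+) code_bit w' w.1.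

Lemma code_adj_irr : irreflexive code_adj.
Proof. by move=> w; rewrite /code_adj eqxx. Qed.

Lemma code_sign_sym : symmetric code_sign.
Proof. by move=> w w'; rewrite /code_sign addbC. Qed.

(* The code of a vertex of color i carrying the bits b, normalized by
   resigning so that its bit at ref_color i vanishes. *)
Definition encode (i : 'I_m.+2) (b : 'I_m.+2 -> bool) : code :=
  (i, [ffun t => b (other_color i t) (+) b (ref_color i)]).

Lemma code_bit_encode i b j :
  j != i -> code_bit (encode i b) j = b j (+) b (ref_color i).
Proof.
move=> j_neq_i; rewrite /code_bit /=.
case: unliftP => [j' ->|j_eq_i]; last by rewrite j_eq_i eqxx in j_neq_i.
case: unliftP => [t ->|->]; first by rewrite ffunE.
by rewrite /ref_color addbb.
Qed.

(* Pair potentials of a proper coloring yield a signed homomorphism to the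
   code graph: resign at the vertices whose bit at their reference color is
   set, and send each vertex to its normalized code. *)
Lemma signed_hom_to_code (T : finType) (e s : rel T) (c : T -> 'I_m.+2)
    (f : T -> 'I_m.+2 -> bool) :
  (forall x y, e x y -> c x != c y) ->
  (forall x y, e x y -> f x (c y) (+) f y (c x) = s x y) ->
  signed_hom e s code_adj code_sign (fun u => encode (c u) (f u)).
Proof.
move=> c_proper f_ok; apply/existsP; exists [set u | f u (ref_color (c u))].
apply/existsP; exists set0; apply/forallP => x; apply/forallP => y.
apply/implyP => exy; have cxy := c_proper x y exy.
have cyx : c y != c x by rewrite eq_sym.
rewrite /code_adj /code_sign /resign /= cxy !inE !code_bit_encode //=.
by rewrite addbF addbACA f_ok.
Qed.

End CodeGraph.

Lemma maps_to_signed_hom (T U : finType) (G : sgraph T) (S : rel T)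
    (eH sH : rel U) (phi : T -> U) :
  irreflexive eH -> symmetric sH ->
  signed_hom (adj G) (neg S) eH sH phi -> maps_to G S #|U|.
Proof.
move=> eH_irr sH_sym /existsP [X /existsP [Y hom]].
apply/existsP; exists [set p | eH (enum_val p.1) (enum_val p.2)].
apply/existsP; exists [set p | sH (enum_val p.1) (enum_val p.2)].
apply/existsP; exists [ffun x => enum_rank (phi x)].
apply/existsP; exists X; apply/existsP; exists [set i | enum_val i \in Y].
apply/forallP => x; apply/forallP => y; apply/implyP => xy.
have /andP [eH_xy /eqP <-] := implyP (forallP (forallP hom x) y) xy.
rewrite /tadj /tneg /resign !ffunE !inE /= !enum_rankK eH_xy (sH_sym (phi y)).
rewrite orbb eqxx /= !andbT; apply: contraTneq eH_xy => /enum_rank_inj ->.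
by rewrite eH_irr.
Qed.

Lemma neg_sym (T : Type) (S : rel T) : symmetric (neg S).
Proof. by move=> x y; rewrite /neg orbC. Qed.

Lemma chi_s_le (T : finType) (G : sgraph T) n :
  (forall S : rel T, maps_to G S n) -> chi_s G <= n.
Proof.
move=> maps_all; apply/bigmax_leqP => S _; rewrite /chi_s_sig.
by case: ex_minnP => n0 _; apply.
Qed.

Theorem mainTheorem16 (T : finType) (G : sgraph T) (k : nat) :
  2 <= k ->
  (exists c : T -> 'I_k, acyclic_coloring G c) ->
  chi_s G <= k * 2 ^ (k - 2).
Proof.
case: k => [|[|m]] // _ [c c_acyclic]; rewrite subn2 -card_code.
apply: chi_s_le => S.
have [f f_ok] := pair_potentials c_acyclic (neg_sym S).
apply: maps_to_signed_hom (@code_adj_irr m) (@code_sign_sym m) _.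
by apply: signed_hom_to_code f_ok; case: c_acyclic.
Qed.
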